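(* Let $X,Y$ be finite sets and consider $\ell^\infty(X)\subseteq B(\ell^2(X))$, $\ell^\infty(Y)\subseteq B(\ell^2(Y))$ acting diagonally. For a multi-relation $R\subseteq X\times X\times Y$ put $V_R=\mathrm{span}\{e_{x_1x_2}\otimes e_{yy}:(x_1,x_2,y)\in R\}\subseteq B(\ell^2(X))\otimes\ell^\infty(Y)$, and for a quantum multi-relation $V$ on $(\ell^\infty(X),\ell^\infty(Y))$ put $R_V=\{(x_1,x_2,y):\exists\,T\in V\text{ with }\langle e_{x_1}\otimes e_y,T(e_{x_2}\otimes e_y)\rangle\ne0\}$. Then $V_R$ is a quantum multi-relation, $R_V$ is a multi-relation, and the assignments $R\mapsto V_R$ and $V\mapsto R_V$ are mutually inverse bijections between multi-relations on $(X,Y)$ and quantum multi-relations on $(\ell^\infty(X),\ell^\infty(Y))$.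
   Context: $\{e_x\}$ is the standard basis of $\ell^2(X)$ and $e_{x_1x_2}$ the matrix units. A multi-relation on a pair of finite sets $(X,Y)$ is a subset $R\subseteq X\times X\times Y$. For finite-dimensional von Neumann algebras $M\subseteq B(H)$, $N\subseteq B(K)$, a quantum multi-relation (multigraph) on $(M,N)$ is a linear subspace $V\subseteq B(H\otimes K)$ such that (1) $V\subseteq B(H)\otimes N$; (2) $V$ is an $(M'\otimes1)$–$(M'\otimes1)$ bimodule, where $M'$ is the commutant of $M$ in $B(H)$; (3) $(1\otimes Z(N))V\subseteq V$, where $Z(N)=N\cap N'$ is the center of $N$. *)

From HB Require Import structures.
From mathcomp Require Import all_boot all_order all_algebra.
From Stdlib Require Import ClassicalEpsilon.
Set Implicit Arguments. Unset Strict Implicit. Unset Printing Implicit Defensive.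
Import GRing.Theory Num.Theory.
Local Open Scope ring_scope.

(* For a finite set I, B(l^2(I)) is modelled as the C-vector space of matrices
   indexed by I x I, the entry at (i,j) being <e_i, A e_j>. *)
Definition Mat (C : numClosedFieldType) (I : finType) := {ffun (I * I)%type -> C^o}.

Section Ops.
Variable C : numClosedFieldType.

Definition opmul (I : finType) (A B : Mat C I) : Mat C I :=
  [ffun p => \sum_(k : I) A (p.1, k) * B (k, p.2)].

Definition opone (I : finType) : Mat C I := [ffun p => (p.1 == p.2)%:R].

Definition munit (I : finType) (i j : I) : Mat C I :=
  [ffun p => ((p.1 == i) && (p.2 == j))%:R].

(* tensor product of operators on l^2(X) (x) l^2(Y) = l^2(X * Y)%type *)
Definition optens (X Y : finType) (A : Mat C X) (B : Mat C Y) : Mat C (X * Y)%type :=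
  [ffun p => A (p.1.1, p.2.1) * B (p.1.2, p.2.2)].

Definition linfty (I : finType) : Mat C I -> Prop :=
  fun A => exists f : I -> C, A = [ffun p => if p.1 == p.2 then f p.1 else 0].

Definition fullB (I : finType) : Mat C I -> Prop := fun _ => True.

Definition commutant (I : finType) (M : Mat C I -> Prop) : Mat C I -> Prop :=
  fun A => forall m, M m -> opmul A m = opmul m A.

Definition center (I : finType) (N : Mat C I -> Prop) : Mat C I -> Prop :=
  fun A => N A /\ commutant N A.

Definition optensor_space (X Y : finType) (P : Mat C X -> Prop)
    (Q : Mat C Y -> Prop) : Mat C (X * Y)%type -> Prop :=
  fun T => exists (n : nat) (a : 'I_n -> Mat C X) (b : 'I_n -> Mat C Y),
    (forall i, P (a i)) /\ (forall i, Q (b i)) /\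
    T = \sum_(i < n) optens (a i) (b i).

Definition quantum_multirel (X Y : finType) (M : Mat C X -> Prop)
    (N : Mat C Y -> Prop) (V : {vspace Mat C (X * Y)%type}) : Prop :=
  [/\ (forall T, T \in V -> optensor_space (@fullB X) N T),
      (forall a T, commutant M a -> T \in V ->
          opmul (optens a (opone Y)) T \in V),
      (forall a T, commutant M a -> T \in V ->
          opmul T (optens a (opone Y)) \in V)
    & (forall z T, center N z -> T \in V ->
          opmul (optens (opone X) z) T \in V)].

Definition VR (X Y : finType) (R : {set X * X * Y}) : {vspace Mat C (X * Y)%type} :=
  <<[seq optens (munit r.1.1 r.1.2) (munit r.2 r.2) | r <- enum R]>>%VS.

End Ops.

Definition propb (P : Prop) : bool :=
  if excluded_middle_informative P then true else false.

Definition RV (C : numClosedFieldType) (X Y : finType)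
    (V : {vspace Mat C (X * Y)%type}) : {set X * X * Y} :=
  [set r : X * X * Y | propb (exists2 T, T \in V &
      T ((r.1.1, r.2), (r.1.2, r.2)) != 0)].

(* The algebra l^infty(X) is maximal abelian, so its commutant is again the
   diagonal matrices, and all three closure conditions of a quantum
   multi-relation amount to stability under multiplication by diagonal
   operators on l^2(X x Y).  A subspace of B(l^2(X)) (x) l^infty(Y) is then
   determined by its support: compressing T by e_{x1 x1} (x) 1 on the left,
   e_{x2 x2} (x) 1 on the right and 1 (x) e_{yy} cuts out the single entry
   T_{(x1,y),(x2,y)} (x) e_{x1 x2} (x) e_{yy}, so every matrix unit of V_{R_V}
   lies in V; conversely the support of any T in V lies in R_V. *)
From HB Require Import structures.
From mathcomp Require Import all_boot all_order all_algebra.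
From Stdlib Require Import ClassicalEpsilon.
Set Implicit Arguments. Unset Strict Implicit. Unset Printing Implicit Defensive.
Import GRing.Theory.
Local Open Scope ring_scope.

Lemma propbP (P : Prop) : reflect P (propb P).
Proof. by rewrite /propb; case: excluded_middle_informative => ?; constructor. Qed.

Section Diagonal.
Variables (C : numClosedFieldType) (I : finType).
Implicit Types (A B D : Mat C I).

Definition is_diag A := forall i j, i != j -> A (i, j) = 0.

Lemma opmul_diagl D B : is_diag D -> opmul D B = [ffun p => D (p.1, p.1) * B p].
Proof.
move=> dD; apply/ffunP => -[i j]; rewrite !ffunE (bigD1 i) //= big1 ?addr0 //.
by move=> k ki; rewrite dD ?mul0r // eq_sym.
Qed.

Lemma opmul_diagr D B : is_diag D -> opmul B D = [ffun p => B p * D (p.2, p.2)].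
Proof.
move=> dD; apply/ffunP => -[i j]; rewrite !ffunE (bigD1 j) //= big1 ?addr0 //.
by move=> k kj; rewrite dD ?mulr0.
Qed.

Lemma linftyP A : linfty A <-> is_diag A.
Proof.
split=> [[f ->] i j /negbTE ij | dA]; first by rewrite ffunE /= ij.
exists (fun i => A (i, i)); apply/ffunP => -[i j]; rewrite ffunE /=.
by case: eqP => [-> // | /eqP]; apply: dA.
Qed.

Lemma munit_diag (i : I) : is_diag (munit C i i).
Proof.
move=> a b; rewrite ffunE /=.
by case: (eqVneq a i) => [-> | //]; case: (eqVneq b i).
Qed.

Lemma opone_diag : is_diag (opone C I).
Proof. by move=> i j /negbTE ij; rewrite ffunE /= ij. Qed.

(* An operator commuting with every e_{jj} is diagonal. *)
Lemma commutant_linftyP A : commutant (@linfty C I) A <-> is_diag A.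
Proof.
split=> [cA i j ij | dA m /linftyP dm].
  have dj := munit_diag j.
  have /ffunP/(_ (i, j)) := cA _ ((linftyP _).2 dj).
  rewrite opmul_diagr // opmul_diagl // !ffunE /= !eqxx (negbTE ij).
  by rewrite mulr1 mul0r.
rewrite opmul_diagl // opmul_diagr //; apply/ffunP => -[i j]; rewrite !ffunE /=.
by case: (eqVneq i j) => [-> | ij]; [rewrite mulrC | rewrite dm // mulr0 mul0r].
Qed.

End Diagonal.

Lemma optens_diag (C : numClosedFieldType) (X Y : finType)
    (a : Mat C X) (b : Mat C Y) :
  is_diag a -> is_diag b -> is_diag (optens a b).
Proof.
move=> da db [x1 y1] [x2 y2]; rewrite ffunE /=.
case: (eqVneq x1 x2) => [-> | ?]; last by rewrite da // mul0r.
case: (eqVneq y1 y2) => [-> | ?]; last by rewrite db // mulr0.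
by rewrite eqxx.
Qed.

Lemma optensZl (C : numClosedFieldType) (X Y : finType)
    (c : C) (a : Mat C X) (b : Mat C Y) :
  optens (c *: a) b = c *: optens a b.
Proof. by apply/ffunP => p; rewrite !ffunE; apply/esym/mulrA. Qed.

Lemma optensor_linfty_block (C : numClosedFieldType) (X Y : finType)
    (P : Mat C X -> Prop) (T : Mat C (X * Y)%type) p :
  optensor_space P (@linfty C Y) T -> T p != 0 -> p.1.2 = p.2.2.
Proof.
move=> [n [a [b [_ [/(_ _)/linftyP db ->]]]]]; rewrite sum_ffunE => nz.
apply/eqP; apply: contraNT nz => ne; rewrite big1 // => i _.
by rewrite ffunE db ?mulr0.
Qed.

Section MultiRelations.
Variables (C : numClosedFieldType) (X Y : finType).
Implicit Types (R : {set X * X * Y}) (T D : Mat C (X * Y)%type).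

Definition tunit (r : X * X * Y) : Mat C (X * Y)%type :=
  optens (munit C r.1.1 r.1.2) (munit C r.2 r.2).

Definition tunit_idx (r : X * X * Y) : (X * Y) * (X * Y) := ((r.1.1, r.2), (r.1.2, r.2)).

Definition in_pattern R (p : (X * Y) * (X * Y)) : bool :=
  ((p.1.1, p.2.1, p.1.2) \in R) && (p.1.2 == p.2.2).

Lemma tunitE r p : tunit r p = (p == tunit_idx r)%:R.
Proof.
case: p r => [[a b] [c d]] [[x1 x2] y]; rewrite !ffunE /= !xpair_eqE.
by case: (a == x1); case: (c == x2); case: (b == y); case: (d == y);
  rewrite /= ?mulr1 ?mulr0.
Qed.

Lemma in_pattern_tidx R r : in_pattern R (tunit_idx r) = (r \in R).
Proof. by case: r => [[x1 x2] y]; rewrite /in_pattern eqxx andbT. Qed.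

Lemma tunit_VR R r : r \in R -> tunit r \in VR C R.
Proof. by move=> rR; apply/memv_span/map_f; rewrite mem_enum. Qed.

Lemma VR_decomp R T : (forall p, T p != 0 -> in_pattern R p) ->
  T = \sum_(r in R) T (tunit_idx r) *: tunit r.
Proof.
move=> suppT; apply/ffunP => p; rewrite sum_ffunE.
have [| np] := boolP (in_pattern R p).
  case: p => [[a b] [c d]] /andP [/= acb /eqP <-].
  rewrite (bigD1 _ acb) /= big1 => [|r /andP [_ ne]].
    by rewrite ffunE tunitE eqxx addr0; apply/esym/mulr1.
  rewrite ffunE tunitE; case: eqP => [ep | _]; last by rewrite scaler0.
  case: r ne ep => [[? ?] ?]; rewrite /tunit_idx => + [ea eb ec _].
  by rewrite ea eb ec eqxx.
have -> : T p = 0 by apply/eqP; apply: contraNT np; apply: suppT.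
rewrite big1 // => r rR; rewrite ffunE tunitE; case: eqP => [ep | _].
  by rewrite ep in_pattern_tidx rR in np.
by rewrite scaler0.
Qed.

Lemma memVR R T : T \in VR C R <-> (forall p, T p != 0 -> in_pattern R p).
Proof.
split=> [TV p | suppT]; last first.
  by rewrite (VR_decomp suppT); apply: memv_suml => r rR; apply/memvZ/tunit_VR.
pose s := in_tuple [seq tunit r | r <- enum R].
rewrite (coord_span (X := s) TV) sum_ffunE; apply: contraNT => np.
rewrite big1 // => i _; have : s`_i \in s by rewrite mem_nth // size_tuple.
case/mapP => r; rewrite mem_enum => rR ->; rewrite ffunE tunitE.
case: eqP => [ep | _]; last by rewrite scaler0.
by rewrite ep in_pattern_tidx rR in np.
Qed.

Lemma VR_opmul_diagl R D T : is_diag D -> T \in VR C R -> opmul D T \in VR C R.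
Proof.
move=> dD /memVR suppT; apply/memVR => p; rewrite opmul_diagl // ffunE.
by move=> nz; apply: suppT; apply: contraNneq nz => ->; rewrite mulr0.
Qed.

Lemma VR_opmul_diagr R D T : is_diag D -> T \in VR C R -> opmul T D \in VR C R.
Proof.
move=> dD /memVR suppT; apply/memVR => p; rewrite opmul_diagr // ffunE => nz.
by apply: suppT; apply: contraNneq nz => ->; rewrite mul0r.
Qed.

Lemma VR_optensor R T : T \in VR C R -> optensor_space (@fullB C X) (@linfty C Y) T.
Proof.
move=> /memVR/VR_decomp ->; rewrite big_enum_val.
pose r i := enum_val (A := mem R) i.
exists #|R|, (fun i => T (tunit_idx (r i)) *: munit C (r i).1.1 (r i).1.2),
  (fun i => munit C (r i).2 (r i).2).
do 2!split=> //; first by move=> i; apply/linftyP/munit_diag.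
by apply: eq_bigr => i _; rewrite optensZl.
Qed.

Lemma VR_quantum_multirel R :
  quantum_multirel (@linfty C X) (@linfty C Y) (VR C R).
Proof.
have dl a : commutant (@linfty C X) a -> is_diag (optens a (opone C Y)).
  by move/commutant_linftyP=> da; apply: optens_diag da (@opone_diag C Y).
split=> [T | a T /dl | a T /dl | z T [/linftyP dz _]].
- exact: VR_optensor.
- exact: VR_opmul_diagl.
- exact: VR_opmul_diagr.
- exact: VR_opmul_diagl (optens_diag (@opone_diag C X) dz).
Qed.

Lemma RV_VR R : RV (VR C R) = R.
Proof.
apply/setP => r; rewrite inE; apply/propbP/idP => [[T /memVR suppT nz] | rR].
  by rewrite -in_pattern_tidx; apply: suppT.
by exists (tunit r); [apply: tunit_VR | rewrite tunitE eqxx oner_neq0].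
Qed.

Definition compress (r : X * X * Y) T : Mat C (X * Y)%type :=
  opmul (optens (opone C X) (munit C r.2 r.2))
    (opmul (optens (munit C r.1.1 r.1.1) (opone C Y))
      (opmul T (optens (munit C r.1.2 r.1.2) (opone C Y)))).

Lemma compressE r T : (forall p, T p != 0 -> p.1.2 = p.2.2) ->
  compress r T = T (tunit_idx r) *: tunit r.
Proof.
move=> blockT.
have dY := optens_diag (@opone_diag C X) (@munit_diag C Y r.2).
have dX1 := optens_diag (@munit_diag C X r.1.1) (@opone_diag C Y).
have dX2 := optens_diag (@munit_diag C X r.1.2) (@opone_diag C Y).
rewrite /compress (opmul_diagr _ dX2) (opmul_diagl _ dX1) (opmul_diagl _ dY).
apply/ffunP => p; rewrite [RHS]ffunE tunitE !ffunE => {dY dX1 dX2}.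
case: p r blockT => [[a b] [c d]] [[x1 x2] y] /(_ ((a, b), (c, d))) /= blockT.
rewrite /tunit_idx !xpair_eqE !eqxx !andbb /= !mulr1 !mul1r.
case: (eqVneq a x1) => [<- | _]; last by rewrite /= !mul0r mulr0 scaler0.
case: (eqVneq b y) => [<- | _]; last by rewrite /= !mul0r scaler0.
case: (eqVneq c x2) => [<- | _]; last by rewrite /= !mulr0 scaler0.
rewrite /= !mul1r mulr1.
case: (eqVneq d b) => [-> | ndb]; first exact/esym/mulr1.
by rewrite scaler0; apply/eqP; apply: contraNT ndb => /blockT ->.
Qed.

Section QuantumMultiRelation.
Variable V : {vspace Mat C (X * Y)%type}.
Hypothesis qV : quantum_multirel (@linfty C X) (@linfty C Y) V.

Lemma qmr_block T p : T \in V -> T p != 0 -> p.1.2 = p.2.2.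
Proof. by case: qV => tV _ _ _ /tV; apply: optensor_linfty_block. Qed.

Lemma qmr_compress r T : T \in V -> compress r T \in V.
Proof.
case: qV => _ mulV_l mulV_r mulV_z TV.
have cD (x : X) : commutant (@linfty C X) (munit C x x).
  exact/commutant_linftyP/munit_diag.
have dY := @munit_diag C Y r.2.
apply: mulV_z; first by split; [apply/linftyP | apply/commutant_linftyP].
exact: mulV_l (cD _) (mulV_r _ _ (cD _) TV).
Qed.

Lemma tunit_qmr r : r \in RV V -> tunit r \in V.
Proof.
rewrite inE => /propbP [T TV nz].
have := qmr_compress r TV; rewrite compressE => [|p]; last exact: qmr_block.
by move/(memvZ (T (tunit_idx r))^-1); rewrite scalerA mulVf // scale1r.
Qed.

Lemma VR_RV : VR C (RV V) = V.
Proof.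
apply/eqP; rewrite eqEsubv; apply/andP; split.
  by apply/span_subvP => g /mapP [r]; rewrite mem_enum => /tunit_qmr + ->.
apply/subvP => T TV; apply/memVR => p nz; have e := qmr_block TV nz.
rewrite /in_pattern e eqxx andbT inE; apply/propbP; exists T => //.
by case: p nz e => [[? ?] [? ?]] /= nz e; rewrite e in nz.
Qed.

End QuantumMultiRelation.

End MultiRelations.

Theorem proposition4p2 (C : numClosedFieldType) (X Y : finType) :
  [/\ (forall R : {set X * X * Y},
         quantum_multirel (@linfty C X) (@linfty C Y) (VR C R)),
      (forall R : {set X * X * Y}, RV (VR C R) = R)
    & (forall V : {vspace Mat C (X * Y)%type},
         quantum_multirel (@linfty C X) (@linfty C Y) V -> VR C (RV V) = V)].
Proof.
split=> [R | R | V qV].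
- exact: VR_quantum_multirel.
- exact: RV_VR.
- exact: VR_RV.
Qed.
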